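(* Let $\tilde R<0$ and let $\mathcal G=(\bar Q,\mu,\eta)$ be an intervention rule whose intervention set $\mathcal I$ is partial. Let $\pi$ be a policy that is $\varepsilon$-suboptimal for the absorbing MDP $\tilde{\mathcal M}$, and let $\pi'=\mathcal G(\pi)$. Then for any policy $\pi^*$, $$V^{\pi^*}(d_0)-V^\pi(d_0)\le\Big(|\tilde R|+\frac1{1-\gamma}\Big)P_{\mathcal G}(\pi^* )+\varepsilon,\qquad \bar V^\pi(d_0)\le\bar V^{\pi'}(d_0)+\frac{\varepsilon}{|\tilde R|}.$$
   Context: $\mathcal M=(\mathcal S,\mathcal A,P,r,\gamma)$ is a discounted MDP with discrete state and action spaces, reward $r(s,a)\in[0,1]$, discount $\gamma\in[0,1)$, initial distribution $d_0$. $\mathcal S$ contains two distinguished states $s_\triangleright,s_\circ$; $\mathcal S_{\mathrm{unsafe}}=\{s_\triangleright,s_\circ\}$, $\mathcal S_{\mathrm{safe}}=\mathcal S\setminus\mathcal S_{\mathrm{unsafe}}$; from $s_\triangleright$ every action leads to $s_\circ$ w.p. 1, $s_\circ$ is absorbing, $r=0$ on $\mathcal S_{\mathrm{unsafe}}$, $d_0(s_\circ)=0$. Cost $c(s,a)=\mathbb 1\{s=s_\triangleright\}$. For a stationary policy $\pi$ with trajectory law $\rho^\pi$ in $\mathcal M$ ($s_0\sim d_0$): $V^\pi(d_0)=\mathbb E_{\rho^\pi}[\sum_t\gamma^tr(s_t,a_t)]$, $\bar V^\pi(d_0)=\mathbb E_{\rho^\pi}[\sum_t\gamma^tc(s_t,a_t)]$.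 Intervention rule: $\mathcal G=(\bar Q,\mu,\eta)$ with backup policy $\mu$, $\eta\in[0,1]$, $\bar Q:\mathcal S_{\mathrm{safe}}\times\mathcal A\to[0,1]$; intervention set $\mathcal I=\{(s,a)\in\mathcal S_{\mathrm{safe}}\times\mathcal A:\bar Q(s,a)-\mathbb E_{a'\sim\mu(\cdot|s)}\bar Q(s,a')>\eta\}$; shielded policy $\mathcal G(\pi)(a|s)=\pi(a|s)\mathbb 1\{(s,a)\notin\mathcal I\}+w(s)\mu(a|s)$, $w(s)=\sum_{\tilde a:(s,\tilde a)\in\mathcal I}\pi(\tilde a|s)$. A set $\mathcal X\subseteq\mathcal S_{\mathrm{safe}}\times\mathcal A$ is partial if for every $(s,a)\in\mathcal X$ there is $a'$ with $(s,a')\notin\mathcal X$. Absorbing MDP: $\tilde{\mathcal M}=(\mathcal S\cup\{s_\dagger\},\mathcal A,\tilde P,\tilde r,\gamma)$: $\tilde r(s,a)=\tilde R$ if $(s,a)\in\mathcal I$, $\tilde r(s_\dagger,a)=0$, $\tilde r=r$ otherwise; $\tilde P(\cdot|s,a)$ is the point mass at $s_\dagger$ if $(s,a)\in\mathcal I$ or $s=s_\dagger$, else $P(\cdot|s,a)$. Policies are extended to $s_\dagger$ arbitrarily; $\tilde V^\pi(d_0)$ is the value in $\tilde{\mathcal M}$; $\tilde V^*(d_0)=\sup_\pi\tilde V^\pi(d_0)$; $\pi$ is $\varepsilon$-suboptimal if $\tilde V^*(d_0)-\tilde V^\pi(d_0)\le\varepsilon$. $P_{\mathcal G}(\pi)=(1-\gamma)\sum_{h\ge0}\gamma^h\Pr_{\rho^\pi}(\exists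 t\le h:(s_t,a_t)\in\mathcal I)$. *)

From HB Require Import structures.
From mathcomp Require Import all_boot all_order all_algebra.
From mathcomp Require Import all_classical all_reals.
From mathcomp Require Import ereal topology normedtype sequences esum.

Set Implicit Arguments.
Unset Strict Implicit.
Unset Printing Implicit Defensive.

Import Order.TTheory GRing.Theory Num.Theory.
Local Open Scope classical_set_scope.
Local Open Scope ring_scope.

Section MDP.
Variables (R : realType) (X A : countType).

Definition isDist (p : X -> R) : Prop :=
  (forall x, 0 <= p x) /\ (\esum_(x in [set: X]) (p x)%:E = 1)%E.

Definition isPolicy (pi : X -> A -> R) : Prop :=
  forall s, (forall a, 0 <= pi s a) /\ (\esum_(a in [set: A]) (pi s a)%:E = 1)%E.

Definition isKernel (P : X -> A -> X -> R) : Prop :=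
  forall s a, isDist (P s a).

Variables (d0 : X -> R) (P : X -> A -> X -> R) (pi : X -> A -> R).

(* probability, under the trajectory law rho^pi, that the trajectory prefix
   (s_0,a_0),...,(s_t,a_t) equals the given list of length t+1 *)
Fixpoint tailprob (x : X * A) (q : seq (X * A)) : R :=
  match q with
  | [::] => 1
  | y :: q' => P x.1 x.2 y.1 * pi y.1 y.2 * tailprob y q'
  end.

Definition pathprob (p : seq (X * A)) : R :=
  match p with
  | [::] => 0
  | x :: q => d0 x.1 * pi x.1 x.2 * tailprob x q
  end.

Definition prefixes (t : nat) : set (seq (X * A)) :=
  [set p | size p = t.+1].

Definition lastval (f : X -> A -> R) (p : seq (X * A)) : R :=
  match rev p with
  | [::] => 0
  | x :: _ => f x.1 x.2
  end.

Definition stepexp (f : X -> A -> R) (t : nat) : \bar R :=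
  (\esum_(p in prefixes t) (pathprob p * lastval f p)%:E)%E.

(* E_{rho^pi}[ sum_t gamma^t f(s_t,a_t) ] for a nonnegative f (Tonelli) *)
Definition nnvalue (gamma : R) (f : X -> A -> R) : \bar R :=
  (\sum_(t <oo) ((gamma ^+ t)%:E * stepexp f t))%E.

Definition value (gamma : R) (f : X -> A -> R) : R :=
  fine (nnvalue gamma (fun s a => Num.max 0 (f s a)))
  - fine (nnvalue gamma (fun s a => Num.max 0 (- f s a))).

Definition probhit (I : X -> A -> Prop) (h : nat) : \bar R :=
  (\esum_(p in [set p | size p = h.+1 /\ exists2 x, x \in p & I x.1 x.2])
     (pathprob p)%:E)%E.

End MDP.

Section Shield.
Variables (R : realType) (S A : countType).

(* intervention set of the rule G = (Qbar, mu, eta); safe = not in S_unsafe *)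
Definition intervene (safe : S -> Prop) (Qbar : S -> A -> R) (mu : S -> A -> R)
  (eta : R) (s : S) (a : A) : Prop :=
  safe s /\
  Qbar s a - fine (\esum_(a' in [set: A]) (mu s a' * Qbar s a')%:E)%E > eta.

Definition partialset (safe : S -> Prop) (I : S -> A -> Prop) : Prop :=
  forall s a, safe s -> I s a -> exists a', ~ I s a'.

Definition shield (I : S -> A -> Prop) (mu pi : S -> A -> R) (s : S) (a : A) : R :=
  (if `[< I s a >] then 0 else pi s a)
  + fine (\esum_(a' in [set a' | I s a']) (pi s a')%:E)%E * mu s a.

Definition PG (d0 : S -> R) (P : S -> A -> S -> R) (gamma : R)
  (I : S -> A -> Prop) (pi : S -> A -> R) : R :=
  (1 - gamma) * fine (\sum_(h <oo) ((gamma ^+ h)%:E * probhit d0 P pi I h))%E.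

(* absorbing MDP: state space option S, None = s_dagger *)
Definition abs_d0 (d0 : S -> R) (o : option S) : R :=
  match o with Some s => d0 s | None => 0 end.

Definition abs_P (P : S -> A -> S -> R) (I : S -> A -> Prop)
  (o : option S) (a : A) (o' : option S) : R :=
  match o with
  | None => if o' is None then 1 else 0
  | Some s => if `[< I s a >] then (if o' is None then 1 else 0)
              else match o' with Some s' => P s a s' | None => 0 end
  end.

Definition abs_r (r : S -> A -> R) (I : S -> A -> Prop) (Rt : R)
  (o : option S) (a : A) : R :=
  match o with
  | None => 0
  | Some s => if `[< I s a >] then Rt else r s a
  end.

Definition restrictS (pi : option S -> A -> R) (s : S) (a : A) : R := pi (Some s) a.

End Shield.

From HB Require Import structures.
From mathcomp Require Import all_boot all_order all_algebra.
From mathcomp Require Import all_classical all_reals.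
From mathcomp Require Import ereal topology normedtype sequences esum.
From mathcomp Require Import ring lra.
Import Order.TTheory GRing.Theory Num.Theory.
Import numFieldNormedType.Exports.
Local Open Scope classical_set_scope.
Local Open Scope ring_scope.
Set Implicit Arguments.
Unset Strict Implicit.

(* A trajectory prefix of length t+1 is a list of state-action pairs, and
   every quantity of the statement is a discounted series over t of
   expectations of functions of such prefixes under the path law pathprob.

   Three prefix statistics then carry the argument: [clean] (I not entered),
   [hit] (I entered) and [first_hit] (I entered for the first time at the last
   step).  The value of a policy of the absorbing MDP is its clean reward
   minus |Rt| times its discounted first-hit probability (absorbing_valueE);
   the first-hit series is at most (1 - g) times the hit series, which is
   P_G (first_hit_le_hit, PG_hit); the cost collected after hitting I is at
   most the first-hit series (cost_after_hit_le).  Comparing pi, through its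
   eps-suboptimality, with pistar extended to s_dagger gives the performance
   bound (regret_bound), and with a policy that never enters I gives
   |Rt| * (first-hit series of pi) <= eps, whence the safety bound
   (cost_bound). *)

Lemma esumZl (R : realType) (T : choiceType) (I : set T) (c : R) (f : T -> \bar R) :
  (0 <= c)%R -> (forall i, 0 <= f i)%E ->
  (\esum_(i in I) (c%:E * f i) = c%:E * \esum_(i in I) f i)%E.
Proof.
move=> c0 f0; rewrite /esum -ereal_supZl//; last first.
  apply/set0P; exists 0%E; exists set0; first exact: fsets_set0.
  by rewrite fsbig_set0.
congr ereal_sup; apply/seteqP; split => x /=.
  by move=> [F FI <-]; exists (\sum_(i \in F) f i)%E; [exists F|rewrite ge0_mule_fsumr].
by move=> [y [F FI <-] <-]; exists F => //; rewrite ge0_mule_fsumr.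
Qed.

Section PathLaw.
Variables (R : realType) (X A : countType).
Variables (d0 : X -> R) (P : X -> A -> X -> R) (pol : X -> A -> R).
Hypothesis d0_ge0 : forall x, 0 <= d0 x.
Hypothesis P_ge0 : forall s a s', 0 <= P s a s'.
Hypothesis pol_ge0 : forall s a, 0 <= pol s a.

Lemma tailprob_ge0 x q : 0 <= tailprob P pol x q.
Proof. by elim: q x => [|y q IH] x //=; rewrite !mulr_ge0. Qed.

Lemma pathprob_ge0 p : 0 <= pathprob d0 P pol p.
Proof. by case: p => [|x q] //=; rewrite !mulr_ge0 // tailprob_ge0. Qed.

Lemma tailprob_rcons x q y : tailprob P pol x (rcons q y) =
  tailprob P pol x q * (P (last x q).1 (last x q).2 y.1 * pol y.1 y.2).
Proof.
elim: q x => [|z q IH] x /=; first by rewrite mulr1 mul1r.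
by rewrite IH !mulrA.
Qed.

Lemma pathprob_rcons x q y : pathprob d0 P pol (rcons (x :: q) y) =
  pathprob d0 P pol (x :: q) * (P (last x q).1 (last x q).2 y.1 * pol y.1 y.2).
Proof. by rewrite rcons_cons /= tailprob_rcons !mulrA. Qed.

Definition Eprefix (t : nat) (F : seq (X * A) -> R) : \bar R :=
  (\esum_(p in @prefixes X A t) (pathprob d0 P pol p * F p)%:E)%E.

Lemma Eprefix_ge0 t F : (forall p, 0 <= F p) -> (0 <= Eprefix t F)%E.
Proof.
by move=> F0; apply: esum_ge0 => p _; rewrite lee_fin mulr_ge0 // pathprob_ge0.
Qed.

Lemma le_Eprefix t F G :
  (forall p, size p = t.+1 -> pathprob d0 P pol p * F p <= pathprob d0 P pol p * G p) ->
  (Eprefix t F <= Eprefix t G)%E.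
Proof. by move=> FG; apply: le_esum => p /FG; rewrite lee_fin. Qed.

Lemma Eprefix_rcons t (F : seq (X * A) -> R) : (forall p, 0 <= F p) ->
  Eprefix t.+1 F = (\esum_(q in @prefixes X A t) \esum_(y in [set: X * A])
     (pathprob d0 P pol (rcons q y) * F (rcons q y))%:E)%E.
Proof.
move=> F0; rewrite esum_esum; last by move=> *; rewrite lee_fin mulr_ge0 // pathprob_ge0.
rewrite /Eprefix (reindex_esum (@prefixes X A t `*`` (fun=> [set: X * A])) _
  (fun k => rcons k.1 k.2)) //.
split.
- by move=> [q y] /= [qt _]; rewrite /prefixes /= size_rcons qt.
- by move=> [q1 y1] [q2 y2] /= _ _ /rcons_inj [-> ->].
- move=> p /=; rewrite /prefixes /=; case/lastP: p => [|q y] //=.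
  by rewrite size_rcons => -[qt]; exists (q, y).
Qed.

End PathLaw.
Arguments Eprefix {R X A}.

Section Expectations.
Variables (R : realType) (X A : countType).
Variables (d0 : X -> R) (P : X -> A -> X -> R) (pol : X -> A -> R).
Hypothesis d0_ge0 : forall x, 0 <= d0 x.
Hypothesis P_ge0 : forall s a s', 0 <= P s a s'.
Hypothesis pol_ge0 : forall s a, 0 <= pol s a.
Hypothesis P_sum1 : forall s a, (\esum_(s' in [set: X]) (P s a s')%:E = 1)%E.
Hypothesis pol_sum1 : forall s, (\esum_(a in [set: A]) (pol s a)%:E = 1)%E.
Hypothesis d0_sum1 : (\esum_(s in [set: X]) (d0 s)%:E = 1)%E.

Local Notation pr := (pathprob d0 P pol).
Local Notation E := (Eprefix d0 P pol).

Lemma esum_pair (f : X -> A -> \bar R) : (forall s a, 0 <= f s a)%E ->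
  (\esum_(y in [set: X * A]) f y.1 y.2 =
   \esum_(s in [set: X]) \esum_(a in [set: A]) f s a)%E.
Proof.
move=> f0; rewrite esum_esum //; congr esum.
by apply/seteqP; split => -[x y].
Qed.

Lemma step_mass s a : (\esum_(y in [set: X * A]) (P s a y.1 * pol y.1 y.2)%:E = 1)%E.
Proof.
rewrite (esum_pair (f := fun s' a' => (P s a s' * pol s' a')%:E)); last first.
  by move=> *; rewrite lee_fin mulr_ge0.
under eq_esum do under eq_esum do rewrite EFinM.
rewrite -(P_sum1 s a); apply: eq_esum => s' _.
by rewrite esumZl // ?pol_sum1 ?mule1 // => a'; rewrite lee_fin.
Qed.

Lemma Eprefix_take t (F : seq (X * A) -> R) : (forall p, 0 <= F p) ->
  E t.+1 (fun p => F (take t.+1 p)) = E t F.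
Proof.
move=> F0; rewrite (Eprefix_rcons d0_ge0 P_ge0 pol_ge0); last by move=> p; exact: F0.
apply: eq_esum => q; rewrite /prefixes /=; case: q => [|x q] // [qt].
transitivity (\esum_(y in [set: X * A]) ((pr (x :: q) * F (x :: q))%:E *
   (P (last x q).1 (last x q).2 y.1 * pol y.1 y.2)%:E))%E.
  apply: eq_esum => y _; rewrite pathprob_rcons.
  have -> : take t.+1 (rcons (x :: q) y) = x :: q.
    by rewrite -cats1 takel_cat /= ?qt // -qt take_size.
  by rewrite -EFinM mulrAC.
rewrite esumZl ?step_mass ?mule1 //; first by rewrite mulr_ge0 // pathprob_ge0.
by move=> y; rewrite lee_fin mulr_ge0.
Qed.

Lemma Eprefix_one t : E t (fun _ => 1) = 1%E.
Proof.
elim: t => [|t IH]; last by rewrite -IH -(Eprefix_take t (F := fun _ => 1)).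
rewrite /Eprefix (reindex_esum [set: X * A] _ (fun y => [:: y])); last first.
  split=> [y //|y1 y2 _ _ [] //|].
  by move=> [|y [|]] //= _; exists y.
rewrite (esum_pair (f := fun s a => (pr [:: (s, a)] * 1)%:E)); last first.
  by move=> *; rewrite lee_fin mulr1 pathprob_ge0.
under eq_esum do under eq_esum do rewrite /= !mulr1 EFinM.
rewrite -d0_sum1; apply: eq_esum => s' _.
by rewrite esumZl // ?pol_sum1 ?mule1 // => a'; rewrite lee_fin.
Qed.

Lemma Eprefix_le t (F : seq (X * A) -> R) (K : R) : (forall p, 0 <= F p <= K) -> (E t F <= K%:E)%E.
Proof.
move=> FK; have K0 : 0 <= K by case/andP: (FK [::]) => a b; apply: le_trans b.
apply: (le_trans (y := E t (fun _ => K))).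
  by apply: le_Eprefix => p _; rewrite ler_wpM2l ?pathprob_ge0 //; case/andP: (FK p).
rewrite /Eprefix; under eq_esum do rewrite mulrC -(mulr1 (pr _)) EFinM.
rewrite esumZl //; last by move=> p; rewrite lee_fin mulr1 pathprob_ge0.
by have := Eprefix_one t; rewrite /Eprefix => ->; rewrite mule1.
Qed.

Definition mean t (F : seq (X * A) -> R) : R := fine (E t F).

Lemma EprefixE t (F : seq (X * A) -> R) (K : R) : (forall p, 0 <= F p <= K) ->
  E t F = (mean t F)%:E.
Proof.
move=> FK; rewrite /mean fineK // ge0_fin_numE.
  by apply: le_lt_trans (Eprefix_le t FK) _; rewrite ltry.
by apply: Eprefix_ge0 => // p; case/andP: (FK p).
Qed.

Lemma mean_bnd t (F : seq (X * A) -> R) (K : R) : (forall p, 0 <= F p <= K) -> 0 <= mean t F <= K.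
Proof.
move=> FK; rewrite -!lee_fin -(EprefixE t FK) Eprefix_le // andbT.
by apply: Eprefix_ge0 => // p; case/andP: (FK p).
Qed.

Lemma le_mean t (F G : seq (X * A) -> R) (K K' : R) :
  (forall p, 0 <= F p <= K) -> (forall p, 0 <= G p <= K') ->
  (forall p, size p = t.+1 -> pr p * F p <= pr p * G p) -> mean t F <= mean t G.
Proof.
by move=> FK GK FG; rewrite -lee_fin -(EprefixE t FK) -(EprefixE t GK); apply: le_Eprefix.
Qed.

Lemma le_mean_pt t (F G : seq (X * A) -> R) (K K' : R) : (forall p, 0 <= F p <= K) ->
  (forall p, 0 <= G p <= K') -> (forall p, size p = t.+1 -> F p <= G p) ->
  mean t F <= mean t G.
Proof.
move=> FK GK FG; apply: (le_mean FK GK) => p hp.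
by apply: ler_wpM2l; [apply: pathprob_ge0 | apply: FG].
Qed.

Lemma meanD t (F G : seq (X * A) -> R) (K K' : R) :
  (forall p, 0 <= F p <= K) -> (forall p, 0 <= G p <= K') ->
  mean t (fun p => F p + G p) = mean t F + mean t G.
Proof.
move=> FK GK.
have FGK p : 0 <= F p + G p <= K + K'.
  by case/andP: (FK p) => a b; case/andP: (GK p) => c d; rewrite addr_ge0 //= lerD.
apply: EFin_inj; rewrite EFinD -(EprefixE t FK) -(EprefixE t GK) -(EprefixE t FGK).
rewrite /Eprefix -esumD.
- by apply: eq_esum => p _; rewrite mulrDr EFinD.
- by move=> p _; rewrite lee_fin mulr_ge0 ?pathprob_ge0 //; case/andP: (FK p).
- by move=> p _; rewrite lee_fin mulr_ge0 ?pathprob_ge0 //; case/andP: (GK p).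
Qed.

Lemma meanZ t (F : seq (X * A) -> R) (K c : R) : 0 <= c -> (forall p, 0 <= F p <= K) ->
  mean t (fun p => c * F p) = c * mean t F.
Proof.
move=> c0 FK.
have cFK p : 0 <= c * F p <= c * K.
  by case/andP: (FK p) => a b; rewrite mulr_ge0 //= ler_wpM2l.
apply: EFin_inj; rewrite EFinM -(EprefixE t FK) -(EprefixE t cFK) /Eprefix -esumZl //.
- by apply: eq_esum => p _; rewrite -EFinM mulrCA.
- by move=> p; rewrite lee_fin mulr_ge0 ?pathprob_ge0 //; case/andP: (FK p).
Qed.

Lemma mean_take t (F : seq (X * A) -> R) (K : R) : (forall p, 0 <= F p <= K) ->
  mean t.+1 (fun p => F (take t.+1 p)) = mean t F.
Proof. by move=> FK; rewrite /mean Eprefix_take // => p; case/andP: (FK p). Qed.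

Lemma mean0 t : mean t (fun _ => 0) = 0.
Proof. by rewrite /mean /Eprefix esum1 // => p _; rewrite mulr0. Qed.

End Expectations.

Section DiscountedSeries.
Variables (R : realType) (g : R).
Hypothesis g_ge0 : 0 <= g.
Hypothesis g_lt1 : g < 1.

Definition dsum (u : nat -> R) : R := fine (\sum_(t <oo) (u t)%:E)%E.

Definition geo_dom (K : R) (u : nat -> R) := forall t, 0 <= u t <= K * g ^+ t.

Lemma geo_dom_ge0 (K : R) (u : nat -> R) : geo_dom K u -> forall t, 0 <= u t.
Proof. by move=> uK t; case/andP: (uK t). Qed.

Lemma partial_geo_le N : \sum_(0 <= t < N) g ^+ t <= (1 - g)^-1.
Proof.
have h1 : 0 < 1 - g by rewrite subr_gt0.
rewrite -(ler_pM2l h1) mulfV ?gt_eqF //.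
have -> : (1 - g) * \sum_(0 <= t < N) g ^+ t = 1 - g ^+ N.
  elim: N => [|N IH]; first by rewrite big_geq // mulr0 expr0 subrr.
  by rewrite big_nat_recr //= mulrDr IH exprS; ring.
by rewrite lerBlDr lerDl exprn_ge0.
Qed.

Lemma eseries_geo_dom_le (u : nat -> R) (K : R) : geo_dom K u ->
  (\sum_(t <oo) (u t)%:E <= (K * (1 - g)^-1)%:E)%E.
Proof.
move=> uK; apply: lime_le.
  by apply: is_cvg_nneseries => n _ _; rewrite lee_fin; exact: geo_dom_ge0 uK n.
apply: nearW => N; rewrite sumEFin lee_fin.
have K0 : 0 <= K by case/andP: (uK 0%N) => a b; move: (le_trans a b); rewrite expr0 mulr1.
apply: (le_trans (y := \sum_(0 <= t < N) K * g ^+ t)).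
  by apply: ler_sum => t _; case/andP: (uK t).
by rewrite -mulr_sumr ler_wpM2l // partial_geo_le.
Qed.

Lemma dsumE (u : nat -> R) (K : R) : geo_dom K u -> (\sum_(t <oo) (u t)%:E)%E = (dsum u)%:E.
Proof.
move=> uK; rewrite /dsum fineK // ge0_fin_numE.
  by apply: (le_lt_trans (eseries_geo_dom_le uK)); rewrite ltry.
by apply: nneseries_ge0 => n _ _; rewrite lee_fin; exact: geo_dom_ge0 uK n.
Qed.

Lemma partial_le_dsum (u : nat -> R) (K : R) N : geo_dom K u -> \sum_(0 <= t < N) u t <= dsum u.
Proof.
move=> uK; rewrite -lee_fin -(dsumE uK) -sumEFin.
by apply: nneseries_lim_ge => n _ _; rewrite lee_fin; exact: geo_dom_ge0 uK n.
Qed.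

Lemma dsum_ge0 (u : nat -> R) (K : R) : geo_dom K u -> 0 <= dsum u.
Proof.
move=> uK; rewrite -lee_fin -(dsumE uK).
by apply: nneseries_ge0 => n _ _; rewrite lee_fin; exact: geo_dom_ge0 uK n.
Qed.

Lemma dsum_le (u : nat -> R) (K c K' : R) : geo_dom K u -> 0 <= K' ->
  (forall N, \sum_(0 <= t < N) u t <= c + K' * g ^+ N) -> dsum u <= c.
Proof.
move=> uK K'0 hN; apply/ler_addgt0Pr => e e0.
rewrite -lee_fin -(dsumE uK); apply: lime_le.
  by apply: is_cvg_nneseries => n _ _; rewrite lee_fin; exact: geo_dom_ge0 uK n.
have gK : geometric K' g @ \oo --> 0 by apply: cvg_geometric; rewrite ger0_norm.
near=> N; rewrite sumEFin lee_fin.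
apply: (le_trans (hN N)); rewrite lerD2l; apply: ltW.
have hK : `|geometric K' g N| < e.
  by near: N; exact: (cvgr0_norm_lt (geometric K' g) gK e e0).
by apply: le_lt_trans hK; rewrite /= ler_norm.
Unshelve. all: by end_near.
Qed.

Lemma dsum_le_geo (u : nat -> R) : geo_dom 1 u -> dsum u <= (1 - g)^-1.
Proof.
move=> uK; apply: (@dsum_le _ 1 _ 0 uK (lexx 0)) => N.
rewrite mul0r addr0; apply: le_trans (partial_geo_le N).
by apply: ler_sum => t _; have /andP[_] := uK t; rewrite mul1r.
Qed.

Lemma dsum0 (u : nat -> R) : (forall t, u t = 0) -> dsum u = 0.
Proof.
move=> u0; have uK : geo_dom 0 u by move=> t; rewrite u0 mul0r lexx.
apply/eqP; rewrite eq_le (dsum_ge0 uK) andbT.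
apply: (@dsum_le _ 0 0 0 uK (lexx 0)) => N.
by rewrite big1 ?mul0r ?addr0 // => t _; rewrite u0.
Qed.

Lemma dsumD (u v : nat -> R) (Ku Kv : R) : geo_dom Ku u -> geo_dom Kv v ->
  dsum (fun t => u t + v t) = dsum u + dsum v.
Proof.
move=> uK vK.
have uvK : geo_dom (Ku + Kv) (fun t => u t + v t).
  move=> t; case/andP: (uK t) => a b; case/andP: (vK t) => c d.
  by rewrite addr_ge0 //= mulrDl lerD.
apply: EFin_inj; rewrite -(dsumE uvK) EFinD -(dsumE uK) -(dsumE vK).
under eq_eseriesr do rewrite EFinD.
by apply: nneseriesD => i _ _; rewrite lee_fin; [exact: geo_dom_ge0 uK i|exact: geo_dom_ge0 vK i].
Qed.

Lemma dsumZ (u : nat -> R) (K c : R) : 0 <= c -> geo_dom K u ->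
  dsum (fun t => c * u t) = c * dsum u.
Proof.
move=> c0 uK.
have cuK : geo_dom (c * K) (fun t => c * u t).
  by move=> t; case/andP: (uK t) => a b; rewrite mulr_ge0 //= -mulrA ler_wpM2l.
apply: EFin_inj; rewrite -(dsumE cuK) EFinM -(dsumE uK).
under eq_eseriesr do rewrite EFinM.
by apply: nneseriesZl => i _; rewrite lee_fin; exact: geo_dom_ge0 uK i.
Qed.

Lemma le_dsum (u v : nat -> R) (Kv : R) : (forall t, 0 <= u t) -> geo_dom Kv v ->
  (forall t, u t <= v t) -> dsum u <= dsum v.
Proof.
move=> u0 vK uv.
have uK : geo_dom Kv u.
  by move=> t; rewrite u0 /=; apply: le_trans (uv t) _; case/andP: (vK t).
apply: (dsum_le uK (K' := 0)) => // N; rewrite mul0r addr0.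
by apply: le_trans (partial_le_dsum N vK); apply: ler_sum => t _.
Qed.

End DiscountedSeries.

Section NonnegativeValues.
Variables (R : realType) (X A : countType).
Variables (d0 : X -> R) (P : X -> A -> X -> R) (pol : X -> A -> R).
Hypothesis d0_ge0 : forall x, 0 <= d0 x.
Hypothesis P_ge0 : forall s a s', 0 <= P s a s'.
Hypothesis pol_ge0 : forall s a, 0 <= pol s a.
Hypothesis P_sum1 : forall s a, (\esum_(s' in [set: X]) (P s a s')%:E = 1)%E.
Hypothesis pol_sum1 : forall s, (\esum_(a in [set: A]) (pol s a)%:E = 1)%E.
Hypothesis d0_sum1 : (\esum_(s in [set: X]) (d0 s)%:E = 1)%E.
Variable (g : R).
Hypothesis g_ge0 : 0 <= g.
Hypothesis g_lt1 : g < 1.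

Local Notation mean := (mean d0 P pol).

Lemma lastval_bnd (f : X -> A -> R) (K : R) : 0 <= K ->
  (forall s a, 0 <= f s a <= K) -> forall p, 0 <= lastval f p <= K.
Proof. by move=> K0 fK p; rewrite /lastval; case: (rev p) => [|x _] //=; rewrite lexx K0. Qed.

Lemma disc_mean_dom (F : seq (X * A) -> R) (K : R) : (forall p, 0 <= F p <= K) ->
  geo_dom g K (fun t => g ^+ t * mean t F).
Proof.
move=> FK t; have /andP[a b] := mean_bnd d0_ge0 P_ge0 pol_ge0 P_sum1 pol_sum1 d0_sum1 t FK.
by rewrite mulr_ge0 ?exprn_ge0 //= mulrC ler_wpM2r ?exprn_ge0.
Qed.

Lemma disc_seriesE (F : seq (X * A) -> R) (K : R) : (forall p, 0 <= F p <= K) ->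
  (\sum_(t <oo) ((g ^+ t)%:E * Eprefix d0 P pol t F))%E =
  (dsum (fun t => g ^+ t * mean t F))%:E.
Proof.
move=> FK; rewrite -(dsumE g_ge0 g_lt1 (disc_mean_dom FK)).
apply: congr_lim; apply/funext => n; apply: eq_bigr => t _.
by rewrite EFinM (EprefixE d0_ge0 P_ge0 pol_ge0 P_sum1 pol_sum1 d0_sum1 t FK).
Qed.

Lemma value_nonneg (f : X -> A -> R) (K : R) : 0 <= K ->
  (forall s a, 0 <= f s a <= K) ->
  value d0 P pol g f = dsum (fun t => g ^+ t * mean t (lastval f)).
Proof.
move=> K0 fK.
have fpos : (fun s a => Num.max 0 (f s a)) = f.
  by apply/funext => s; apply/funext => a; case/andP: (fK s a) => h _; rewrite max_r.
have fneg : (fun s a => Num.max 0 (- f s a)) = (fun _ _ => 0).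
  apply/funext => s; apply/funext => a; case/andP: (fK s a) => h _.
  by rewrite max_l // oppr_le0.
have lastval0 : lastval (fun (_ : X) (_ : A) => 0 : R) = (fun _ => 0).
  by apply/funext => p; rewrite /lastval; case: (rev p).
have zK : forall p, 0 <= (fun _ : seq (X * A) => 0 : R) p <= 0 by move=> p; rewrite lexx.
rewrite /value fpos fneg /nnvalue /stepexp lastval0.
rewrite -/(Eprefix d0 P pol _ _) (disc_seriesE (lastval_bnd K0 fK)).
under eq_eseriesr do rewrite -/(Eprefix d0 P pol _ _).
rewrite (disc_seriesE zK) (@dsum0 _ g g_ge0 g_lt1 (fun t => g ^+ t * mean t (fun=> 0))).
  by rewrite subr0.
by move=> t; rewrite mean0 mulr0.
Qed.

End NonnegativeValues.

Section AbsorbingTransfer.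
Variables (R : realType) (S A : countType).
Variables (d0 : S -> R) (P : S -> A -> S -> R) (I : S -> A -> Prop).
Variable (rho : option S -> A -> R).
Hypothesis d0_ge0 : forall x, 0 <= d0 x.
Hypothesis P_ge0 : forall s a s', 0 <= P s a s'.
Hypothesis rho_ge0 : forall s a, 0 <= rho s a.

Definition intervb (x : S * A) : bool := `[< I x.1 x.2 >].
Definition avoid (p : seq (S * A)) : bool := all (fun x => ~~ intervb x) p.
Definition init (p : seq (S * A)) : seq (S * A) :=
  if p is x :: q then belast x q else [::].
Definition lift (p : seq (S * A)) : seq (option S * A) := map (fun x => (Some x.1, x.2)) p.

Local Notation tP := (abs_P P I).
Local Notation td0 := (abs_d0 d0).

(* Before absorption the absorbing MDP follows M: a lifted prefix has the
   probability of the original one if it avoids I before its last pair,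
   and probability 0 otherwise. *)
Lemma tailprob_lift x q : tailprob tP rho (Some x.1, x.2) (lift q) =
  tailprob P (restrictS rho) x q * (avoid (belast x q))%:R.
Proof.
elim: q x => [|y q IH] x /=; first by rewrite mulr1.
rewrite IH /restrictS /intervb /=; case: (asboolP (I x.1 x.2)) => hx /=.
  by rewrite !mul0r mulr0.
by rewrite !mulrA.
Qed.

Lemma pathprob_lift p : pathprob td0 tP rho (lift p) =
  pathprob d0 P (restrictS rho) p * (avoid (init p))%:R.
Proof.
case: p => [|x q] /=; first by rewrite mul0r.
by rewrite tailprob_lift /restrictS !mulrA.
Qed.

Lemma lastval_lift (f : option S -> A -> R) p :
  lastval f (lift p) = lastval (fun s a => f (Some s) a) p.
Proof. by rewrite /lastval /lift -map_rev; case: (rev p). Qed.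

Lemma lift_surj (q : seq (option S * A)) : ~~ has (fun y => y.1 == None) q ->
  exists p, q = lift p.
Proof.
elim: q => [|[[s|] a] q IH] //=; first by exists [::].
by move=> /IH [p ->]; exists ((s, a) :: p).
Qed.

(* s_dagger is absorbing: a prefix through s_dagger cannot end in S. *)
Lemma tailprob_from_dagger (x : option S * A) q : x.1 = None -> (last x q).1 <> None ->
  tailprob tP rho x q = 0.
Proof.
elim: q x => [|y q IH] x /= hx hl //.
case: x hx hl => [[s|] a] //= _ hl.
by case: y hl => [[s'|] a'] /= hl; [rewrite !mul0r | rewrite IH // mulr0].
Qed.

Lemma tailprob_through_dagger x q : has (fun y => y.1 == None) q ->
  (last x q).1 <> None -> tailprob tP rho x q = 0.
Proof.
elim: q x => [|y q IH] x //= /orP[/eqP hy|hq] hl.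
  by rewrite tailprob_from_dagger // mulr0.
by rewrite IH // mulr0.
Qed.

Lemma pathprob_through_dagger (f : option S -> A -> R) q : (forall a, f None a = 0) ->
  has (fun y => y.1 == None) q -> pathprob td0 tP rho q * lastval f q = 0.
Proof.
move=> fN; case: q => [|x q] //.
have -> : lastval f (x :: q) = f (last x q).1 (last x q).2.
  by rewrite /lastval lastI rev_rcons.
case E: (last x q).1 => [s|]; last by rewrite fN mulr0.
move=> /orP[/eqP hx|hq]; first by rewrite /= /abs_d0 hx !mul0r.
by rewrite /= tailprob_through_dagger ?E // !mulr0 mul0r.
Qed.

Lemma Eprefix_absorbing t (f : option S -> A -> R) : (forall a, f None a = 0) ->
  (forall o a, 0 <= f o a) ->
  Eprefix td0 tP rho t (lastval f) = Eprefix d0 P (restrictS rho) t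
    (fun p => (avoid (init p))%:R * lastval (fun s a => f (Some s) a) p).
Proof.
move=> fN f0.
have pos q : 0 <= pathprob td0 tP rho q * lastval f q.
  rewrite mulr_ge0 //; last by rewrite /lastval; case: (rev q).
  apply: pathprob_ge0 => //; first by case.
  by move=> [s|] a [s'|] /=; rewrite ?lexx ?ler01 //; case: ifP.
rewrite /Eprefix (esumID (range lift)); last by move=> q _; rewrite lee_fin pos.
rewrite [X in (_ + X)%E]esum1 ?adde0; last first.
  move=> q [_ /= hq]; rewrite pathprob_through_dagger //.
  by apply: contra_notT hq => /lift_surj [p ->]; exists p.
have -> : @prefixes (option S) A t `&` range lift = lift @` (@prefixes S A t).
  apply/seteqP; split.
  - by move=> q [qt [p _ hp]]; exists p => //; rewrite /prefixes /= -qt -hp size_map.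
  - by move=> q [p pt <-]; split; [rewrite /prefixes /= size_map | exists p].
rewrite esum_image; last by move=> p1 p2 _ _; apply: inj_map => -[s a] [s' a'] /= [-> ->].
by apply: eq_esum => p _; rewrite pathprob_lift lastval_lift; congr EFin; ring.
Qed.

End AbsorbingTransfer.

(* Moving the mass that v puts on J onto a distribution k yields again a
   distribution; this is the shape of G(pi) and of the never-intervening policy. *)
Lemma redistribute_dist (R : realType) (A : countType) (v k : A -> R) (J : A -> Prop) :
  (forall a, 0 <= v a) -> (\esum_(a in [set: A]) (v a)%:E = 1)%E ->
  (forall a, 0 <= k a) -> (\esum_(a in [set: A]) (k a)%:E = 1)%E ->
  let w := fine (\esum_(a' in [set a' | J a']) (v a')%:E)%E in
  (forall a, 0 <= (if `[< J a >] then 0 else v a) + w * k a) /\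
  (\esum_(a in [set: A]) ((if `[< J a >] then 0 else v a) + w * k a)%:E = 1)%E.
Proof.
move=> v0 vs k0 ks w.
set W := (\esum_(a' in [set a' | J a']) (v a')%:E)%E.
have vsplit : (\esum_(a in [set: A]) (v a)%:E =
    W + \esum_(a in ~` [set a' | J a']) (v a)%:E)%E.
  by rewrite (esumID [set a' | J a']) ?setTI // => a _; rewrite lee_fin.
have W0 : (0 <= W)%E by apply: esum_ge0 => a _; rewrite lee_fin.
have Wfin : W \is a fin_num.
  rewrite ge0_fin_numE //; apply: (le_lt_trans (y := 1%E)); last by rewrite ltry.
  by rewrite -vs vsplit leeDl // esum_ge0 // => a _; rewrite lee_fin.
have w0 : 0 <= w by rewrite fine_ge0.
split=> [a|]; first by rewrite addr_ge0 ?mulr_ge0 //; case: ifP.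
rewrite -vs vsplit; under eq_esum do rewrite EFinD.
rewrite esumD; first last.
- by move=> a _; rewrite lee_fin mulr_ge0.
- by move=> a _; rewrite lee_fin; case: ifP.
rewrite addeC; congr (_ + _)%E.
  under eq_esum do rewrite EFinM.
  by rewrite esumZl // ?ks ?mule1 ?fineK // => a; rewrite lee_fin.
rewrite [RHS]esum_mkcond; apply: eq_esum => a _.
case: (asboolP (J a)) => ha.
  by rewrite ifF //; apply/negbTE; rewrite in_setC negbK; apply/mem_set.
by rewrite ifT // in_setC; apply/negP => /set_mem.
Qed.

Section PathMonotone.
Variables (R : realType) (X A : countType) (d0 : X -> R) (P : X -> A -> X -> R).
Hypothesis d0_ge0 : forall x, 0 <= d0 x.
Hypothesis P_ge0 : forall s a s', 0 <= P s a s'.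

Lemma tailprob_mono (s1 s2 : X -> A -> R) x q : (forall s a, 0 <= s1 s a) ->
  (forall y, y \in q -> s1 y.1 y.2 <= s2 y.1 y.2) ->
  tailprob P s1 x q <= tailprob P s2 x q.
Proof.
move=> s10; elim: q x => [|y q IH] x //= hq.
have hy : s1 y.1 y.2 <= s2 y.1 y.2 by apply: hq; rewrite inE eqxx.
rewrite -!mulrA; apply: ler_wpM2l => //.
apply: ler_pM => //; first by rewrite tailprob_ge0.
by apply: IH => z hz; apply: hq; rewrite inE hz orbT.
Qed.

Lemma pathprob_mono (s1 s2 : X -> A -> R) p : (forall s a, 0 <= s1 s a) ->
  (forall y, y \in p -> s1 y.1 y.2 <= s2 y.1 y.2) ->
  pathprob d0 P s1 p <= pathprob d0 P s2 p.
Proof.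
move=> s10; case: p => [|x q] //= hp.
have hx : s1 x.1 x.2 <= s2 x.1 x.2 by apply: hp; rewrite inE eqxx.
apply: ler_pM; rewrite ?mulr_ge0 ?tailprob_ge0 //; first by apply: ler_wpM2l.
by apply: tailprob_mono => // z hz; apply: hp; rewrite inE hz orbT.
Qed.

Lemma le_Eprefix_policy (s1 s2 : X -> A -> R) t (F : seq (X * A) -> R) :
  (forall s a, 0 <= s1 s a) -> (forall p, 0 <= F p) ->
  (forall p, F p != 0 -> forall y, y \in p -> s1 y.1 y.2 <= s2 y.1 y.2) ->
  (Eprefix d0 P s1 t F <= Eprefix d0 P s2 t F)%E.
Proof.
move=> s10 F0 hF; apply: le_esum => p _; rewrite lee_fin.
have [->|Fp] := eqVneq (F p) 0; first by rewrite !mulr0.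
by apply: ler_wpM2r => //; apply: pathprob_mono => // y; apply: hF.
Qed.

Lemma pathprob_rcons_null (pol : X -> A -> R) q y : pol y.1 y.2 = 0 ->
  pathprob d0 P pol (rcons q y) = 0.
Proof.
move=> py; case: q => [|x q]; first by rewrite /= py mulr0 mul0r.
by rewrite pathprob_rcons py !mulr0.
Qed.

End PathMonotone.

Section ShieldPolicies.
Variables (R : realType) (S A : countType) (I : S -> A -> Prop).

Lemma shield_policy (sg mu : S -> A -> R) : isPolicy sg -> isPolicy mu ->
  isPolicy (shield I mu sg).
Proof.
move=> H Hm s; have [h1 h2] := H s; have [m1 m2] := Hm s.
by have [] := redistribute_dist (I s) h1 h2 m1 m2.
Qed.

Lemma shield_ge (sg mu : S -> A -> R) : isPolicy sg -> isPolicy mu ->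
  forall s a, ~ I s a -> sg s a <= shield I mu sg s a.
Proof.
move=> H Hm s a hI; rewrite /shield ifF; last by apply/negbTE/negP => /asboolP.
rewrite lerDl mulr_ge0 //; last by case: (Hm s) => m1 _; exact: m1.
by rewrite fine_ge0 // esum_ge0 // => a' _; rewrite lee_fin; case: (H s) => h1 _; exact: h1.
Qed.

(* A policy of the absorbing MDP that never intervenes: in a state where some
   action is not in I, the mass of I is moved to such an action. *)
Definition avoider (pi : option S -> A -> R) (o : option S) (a : A) : R :=
  match o with
  | None => pi None a
  | Some s =>
    if pselect (exists a', ~ I s a') is left h then
      (if `[< I s a >] then 0 else pi (Some s) a) +
      fine (\esum_(a' in [set a' | I s a']) (pi (Some s) a')%:E)%E *
        ((a == proj1_sig (cid h)) : bool)%:R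
    else pi (Some s) a
  end.

Lemma point_mass_sum (a0 : A) : (\esum_(a in [set: A]) (((a == a0) : bool)%:R : R)%:E = 1)%E.
Proof.
rewrite (esumID [set a0]); last by move=> a _; rewrite lee_fin; exact: ler0n.
rewrite !setTI esum_set1 ?eqxx ?lee_fin ?ler01 // esum1 ?adde0 //.
by move=> a /= /eqP /negbTE ->.
Qed.

Lemma avoider_policy (pi : option S -> A -> R) : isPolicy pi -> isPolicy (avoider pi).
Proof.
move=> H [s|] /=; last exact: H.
case: pselect => [h|_]; last exact: H.
have [h1 h2] := H (Some s).
have [] := redistribute_dist (I s) h1 h2
  (k := fun a => ((a == proj1_sig (cid h)) : bool)%:R) (fun a => ler0n _ _) (point_mass_sum _).
by split.
Qed.

Lemma avoider_ge (pi : option S -> A -> R) : isPolicy pi ->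
  forall s a, ~ I s a -> restrictS pi s a <= restrictS (avoider pi) s a.
Proof.
move=> H s a hI; rewrite /restrictS /=; case: pselect => [h|_] //.
rewrite ifF; last by apply/negbTE/negP => /asboolP.
rewrite lerDl mulr_ge0 // fine_ge0 // esum_ge0 // => a' _.
by rewrite lee_fin; case: (H (Some s)) => h1 _; exact: h1.
Qed.

Lemma avoider_null (pi : option S -> A -> R) :
  (forall s a, I s a -> exists a', ~ I s a') ->
  forall s a, I s a -> restrictS (avoider pi) s a = 0.
Proof.
move=> Ipart s a hI; rewrite /restrictS /=.
case: pselect => [h|hn]; last by exfalso; apply: hn; exact: (Ipart _ _ hI).
rewrite ifT; last exact/asboolP.
case: (cid h) => a0 /= ha0; rewrite add0r.
have -> : (a == a0) = false by apply/negbTE/negP => /eqP ha; apply: ha0; rewrite -ha.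
by rewrite mulr0.
Qed.

End ShieldPolicies.

Section Hitting.
Variables (R : realType) (S A : countType).
Variables (P : S -> A -> S -> R) (d0 : S -> R) (I : S -> A -> Prop) (g : R).
Hypothesis HP : isKernel P.
Hypothesis Hd : isDist d0.
Hypothesis g_ge0 : 0 <= g.
Hypothesis g_lt1 : g < 1.

Let P_ge0 s a s' : 0 <= P s a s'. Proof. by case: (HP s a) => h _; exact: h. Qed.
Let P_sum1 s a : (\esum_(s' in [set: S]) (P s a s')%:E = 1)%E. Proof. by case: (HP s a). Qed.
Let d0_ge0 s : 0 <= d0 s. Proof. by case: Hd. Qed.
Let d0_sum1 : (\esum_(s in [set: S]) (d0 s)%:E = 1)%E. Proof. by case: Hd. Qed.

Definition hit (p : seq (S * A)) : R := (~~ avoid I p)%:R.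
Definition clean (p : seq (S * A)) : R := (avoid I p)%:R.
Definition first_hit (p : seq (S * A)) : R :=
  (avoid I (init p))%:R * lastval (fun s a => (`[< I s a >] : bool)%:R) p.

Lemma indicator_bnd (b : bool) : 0 <= (b%:R : R) <= 1.
Proof. by case: b; rewrite ?lexx ?ler01. Qed.

Lemma mul_bnd (x y : R) : 0 <= x <= 1 -> 0 <= y <= 1 -> 0 <= x * y <= 1.
Proof. by move=> /andP[a b] /andP[c d]; rewrite mulr_ge0 //= -(mulr1 1) ler_pM. Qed.

Lemma lastval_bnd1 (f : S -> A -> R) p : (forall s a, 0 <= f s a <= 1) ->
  0 <= lastval f p <= 1.
Proof. by move=> hf; apply: lastval_bnd => //; rewrite ler01. Qed.

Lemma hit_bnd p : 0 <= hit p <= 1. Proof. exact: indicator_bnd. Qed.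
Lemma clean_bnd p : 0 <= clean p <= 1. Proof. exact: indicator_bnd. Qed.
Lemma first_hit_bnd p : 0 <= first_hit p <= 1.
Proof.
by apply: mul_bnd; [exact: indicator_bnd | apply: lastval_bnd1 => *; exact: indicator_bnd].
Qed.

Lemma hit_lastval_bnd (f : S -> A -> R) : (forall s a, 0 <= f s a <= 1) ->
  forall p, 0 <= hit p * lastval f p <= 1.
Proof. by move=> hf p; apply: mul_bnd; [exact: hit_bnd | exact: lastval_bnd1]. Qed.

Lemma clean_lastval_bnd (f : S -> A -> R) : (forall s a, 0 <= f s a <= 1) ->
  forall p, 0 <= clean p * lastval f p <= 1.
Proof. by move=> hf p; apply: mul_bnd; [exact: clean_bnd | exact: lastval_bnd1]. Qed.

Lemma init_rcons (q : seq (S * A)) y : init (rcons q y) = q.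
Proof. by case: q => [|x q] //=; rewrite belast_rcons. Qed.

Lemma lastval_rcons (f : S -> A -> R) (q : seq (S * A)) y : lastval f (rcons q y) = f y.1 y.2.
Proof. by rewrite /lastval rev_rcons. Qed.

Lemma lastval_cons (f : S -> A -> R) x q : lastval f (x :: q) = f (last x q).1 (last x q).2.
Proof. by rewrite /lastval lastI rev_rcons. Qed.

Lemma avoid_rcons (q : seq (S * A)) y : avoid I (rcons q y) = avoid I q && ~~ intervb I y.
Proof. by rewrite /avoid all_rcons andbC. Qed.

Lemma take_rcons_size (q : seq (S * A)) y n : size q = n -> take n (rcons q y) = q.
Proof. by move=> <-; rewrite -cats1 takel_cat // take_size. Qed.

Section FixedPolicy.
Variable (sg : S -> A -> R).
Hypothesis Hsg : isPolicy sg.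
Let sg_ge0 s a : 0 <= sg s a. Proof. by case: (Hsg s) => h _; exact: h. Qed.
Let sg_sum1 s : (\esum_(a in [set: A]) (sg s a)%:E = 1)%E. Proof. by case: (Hsg s). Qed.

Local Notation m := (mean d0 P sg).
Let m_bnd := mean_bnd d0_ge0 P_ge0 sg_ge0 P_sum1 sg_sum1 d0_sum1.
Let m_le := le_mean_pt d0_ge0 P_ge0 sg_ge0 P_sum1 sg_sum1 d0_sum1.
Let mD := meanD d0_ge0 P_ge0 sg_ge0 P_sum1 sg_sum1 d0_sum1.
Let m_take := mean_take d0_ge0 P_ge0 sg_ge0 P_sum1 sg_sum1.
Let m_dom := disc_mean_dom d0_ge0 P_ge0 sg_ge0 P_sum1 sg_sum1 d0_sum1 g_ge0.

Definition disc (F : seq (S * A) -> R) : R := dsum (fun t => g ^+ t * m t F).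

Lemma disc_ge0 (F : seq (S * A) -> R) : (forall p, 0 <= F p <= 1) -> 0 <= disc F.
Proof. by move=> FK; exact (dsum_ge0 g_ge0 g_lt1 (m_dom FK)). Qed.

Lemma disc_le_geo (F : seq (S * A) -> R) : (forall p, 0 <= F p <= 1) -> disc F <= (1 - g)^-1.
Proof. by move=> FK; exact (dsum_le_geo g_ge0 g_lt1 (m_dom FK)). Qed.

Lemma le_disc (F G : seq (S * A) -> R) : (forall p, 0 <= F p <= 1) -> (forall p, 0 <= G p <= 1) ->
  (forall p, F p <= G p) -> disc F <= disc G.
Proof.
move=> FK GK FG; apply: (le_dsum g_ge0 g_lt1 (geo_dom_ge0 (m_dom FK)) (m_dom GK)) => t.
by rewrite ler_wpM2l ?exprn_ge0 //; apply: (m_le FK GK) => p _.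
Qed.

Lemma first_hit_step t : m t hit + m t.+1 first_hit <= m t.+1 hit.
Proof.
rewrite -(m_take t hit_bnd) -(mD _ (K := 1) (K' := 1)); first last.
- exact: first_hit_bnd.
- by move=> p; exact: hit_bnd.
apply: (m_le (K := 2) (K' := 1)); last 1 first.
- case/lastP => [|q y] //; rewrite size_rcons => -[hq].
  rewrite take_rcons_size // /hit /first_hit init_rcons lastval_rcons avoid_rcons /intervb.
  by case: (avoid I q); case: (asboolP (I y.1 y.2)) => /= _; lra.
- move=> p; have /andP[h1 h2] := hit_bnd (take t.+1 p).
  by have /andP[h3 h4] := first_hit_bnd p; apply/andP; split; lra.
- exact: hit_bnd.
Qed.

Lemma first_hit_start : m 0 first_hit <= m 0 hit.
Proof.
apply: (m_le first_hit_bnd hit_bnd) => -[|y [|]] // _.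
by rewrite /first_hit /hit /lastval /= mul1r /avoid /= andbT negbK.
Qed.

(* Summation by parts of first_hit_step. *)
Lemma first_hit_partial N : \sum_(0 <= t < N.+1) g ^+ t * m t first_hit <=
  (1 - g) * \sum_(0 <= t < N.+1) g ^+ t * m t hit + g ^+ N.+1 * m N hit.
Proof.
elim: N => [|N IH].
  rewrite !big_nat1 expr0 !mul1r expr1.
  by have := first_hit_start; lra.
rewrite big_nat_recr //= [X in _ <= (1 - g) * X + _]big_nat_recr //=.
have := ler_wpM2l (exprn_ge0 N.+1 g_ge0) (first_hit_step N).
move: IH; rewrite [g ^+ N.+2]exprS.
set x := \sum_(0 <= i < N.+1) _; set y := \sum_(0 <= i < N.+1) _.
set u := m N hit; set v := m N.+1 first_hit; set w := m N.+1 hit.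
set G := g ^+ N.+1 => h1 h2.
have -> : (1 - g) * (y + G * w) + g * G * w = (1 - g) * y + G * w by ring.
by rewrite mulrDr in h2; lra.
Qed.

Lemma first_hit_le_hit : disc first_hit <= (1 - g) * disc hit.
Proof.
apply: (dsum_le g_ge0 g_lt1 (m_dom first_hit_bnd) ler01) => -[|N].
  by rewrite big_geq // expr0 mulr1 addr_ge0 // mulr_ge0 ?(disc_ge0 hit_bnd) // subr_ge0 ltW.
apply: (le_trans (first_hit_partial N)); apply: lerD.
  apply: ler_wpM2l; first by rewrite subr_ge0 ltW.
  exact: (partial_le_dsum g_ge0 g_lt1 _ (m_dom hit_bnd)).
have /andP[_ h] := m_bnd N hit_bnd.
by rewrite mul1r -{2}(mulr1 (g ^+ N.+1)) ler_wpM2l // exprn_ge0.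
Qed.

Lemma value_split (f : S -> A -> R) : (forall s a, 0 <= f s a <= 1) ->
  value d0 P sg g f = disc (fun p => clean p * lastval f p) + disc (fun p => hit p * lastval f p).
Proof.
move=> fK.
rewrite (value_nonneg d0_ge0 P_ge0 sg_ge0 P_sum1 sg_sum1 d0_sum1 g_ge0 g_lt1 ler01 fK).
rewrite /disc -(dsumD g_ge0 g_lt1 (m_dom (clean_lastval_bnd fK)) (m_dom (hit_lastval_bnd fK))).
congr dsum; apply/funext => t; rewrite -mulrDr -(mD _ (clean_lastval_bnd fK) (hit_lastval_bnd fK)).
congr (_ * m t _); apply/funext => p.
by rewrite /clean /hit; case: (avoid I p); rewrite /= ?mul1r ?mul0r ?addr0 ?add0r.
Qed.

Lemma first_hit_null : (forall s a, I s a -> sg s a = 0) -> forall t, m t first_hit = 0.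
Proof.
move=> hI t; apply/eqP; rewrite eq_le; have /andP[-> _] := m_bnd t first_hit_bnd.
rewrite andbT -(mean0 d0 P sg t).
apply: (le_mean d0_ge0 P_ge0 sg_ge0 P_sum1 sg_sum1 d0_sum1 (K := 1) (K' := 0) first_hit_bnd).
  by move=> _; rewrite lexx.
case/lastP => [|q y] _; first by rewrite /first_hit /lastval /= !mulr0.
rewrite /first_hit lastval_rcons; case: (asboolP (I y.1 y.2)) => hy; last by rewrite !mulr0.
by rewrite pathprob_rcons_null ?mul0r //; apply: hI.
Qed.

Lemma probhit_hit h : probhit d0 P sg I h = Eprefix d0 P sg h hit.
Proof.
rewrite /probhit /Eprefix esum_mkcond [RHS]esum_mkcond; apply: eq_esum => p _.
rewrite /prefixes /hit /avoid.
case: (boolP (p \in [set p | size p = h.+1 /\ exists2 x, x \in p & I x.1 x.2])).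
  move=> /set_mem [hs [x hx hI]]; rewrite ifT; last exact/mem_set.
  have -> : ~~ all (fun x => ~~ intervb I x) p.
    by apply/negP => /allP /(_ x hx); rewrite /intervb; case: (asboolP (I x.1 x.2)).
  by rewrite mulr1.
move=> hn; case: ifP => // /set_mem hs.
suff -> : all (fun x => ~~ intervb I x) p by rewrite mulr0.
apply/allP => x hx; rewrite /intervb; case: (asboolP (I x.1 x.2)) => // hI.
by exfalso; move/negP: hn; apply; apply/mem_set; split => //; exists x.
Qed.

Lemma PG_hit : PG d0 P g I sg = (1 - g) * disc hit.
Proof.
rewrite /PG /disc; congr (_ * _).
transitivity (fine (\sum_(t <oo) ((g ^+ t)%:E * Eprefix d0 P sg t hit))%E).
  congr fine; apply: congr_lim; apply/funext => n; apply: eq_bigr => h _; congr (_ * _)%E.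
  exact: probhit_hit.
by rewrite (disc_seriesE d0_ge0 P_ge0 sg_ge0 P_sum1 sg_sum1 d0_sum1 g_ge0 g_lt1 hit_bnd).
Qed.

End FixedPolicy.

Lemma disc_clean_mono (s1 s2 : S -> A -> R) (f : S -> A -> R) :
  isPolicy s1 -> isPolicy s2 -> (forall s a, 0 <= f s a <= 1) ->
  (forall s a, ~ I s a -> s1 s a <= s2 s a) ->
  disc s1 (fun p => clean p * lastval f p) <= disc s2 (fun p => clean p * lastval f p).
Proof.
move=> H1 H2 fK h12.
have s1_ge0 s a : 0 <= s1 s a by case: (H1 s) => h _; exact: h.
have s2_ge0 s a : 0 <= s2 s a by case: (H2 s) => h _; exact: h.
have s1_sum1 s := proj2 (H1 s); have s2_sum1 s := proj2 (H2 s).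
have b := clean_lastval_bnd fK.
rewrite /disc; apply: (le_dsum g_ge0 g_lt1 _
  (disc_mean_dom d0_ge0 P_ge0 s2_ge0 P_sum1 s2_sum1 d0_sum1 g_ge0 b)).
  by move=> t; case/andP: (disc_mean_dom d0_ge0 P_ge0 s1_ge0 P_sum1 s1_sum1 d0_sum1 g_ge0 b t).
move=> t; apply: ler_wpM2l; first exact: exprn_ge0.
rewrite -lee_fin -(EprefixE d0_ge0 P_ge0 s1_ge0 P_sum1 s1_sum1 d0_sum1 t b).
rewrite -(EprefixE d0_ge0 P_ge0 s2_ge0 P_sum1 s2_sum1 d0_sum1 t b).
apply: le_Eprefix_policy => // [p|p]; first by case/andP: (b p).
rewrite /clean; case hp: (avoid I p); last by rewrite mul0r eqxx.
move=> _ y hy; apply: h12.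
by move/allP: hp => /(_ y hy); rewrite /intervb => /negP hn hI; apply: hn; exact/asboolP.
Qed.

End Hitting.
Arguments hit {R S A} I p.
Arguments clean {R S A} I p.
Arguments first_hit {R S A} I p.
Arguments first_hit_bnd {R S A} I p.
Arguments hit_bnd {R S A} I p.

Lemma dist_point_mass (R : realType) (T : countType) (f : T -> R) x0 x :
  (forall y, 0 <= f y) -> (\esum_(y in [set: T]) (f y)%:E = 1)%E ->
  f x0 = 1 -> x <> x0 -> f x = 0.
Proof.
move=> f0 fs fx0 xx0; apply/eqP; rewrite eq_le f0 andbT.
have f0E y : (0 <= (f y)%:E)%E by rewrite lee_fin.
have split0 := esumID [set x0] [set: T] (fun y => (f y)%:E) (fun y _ => f0E y).
rewrite !setTI esum_set1 // fx0 fs in split0.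
have split1 := esumID [set x] (~` [set x0]) (fun y => (f y)%:E) (fun y _ => f0E y).
have sing : ~` [set x0] `&` [set x] = [set x].
  by apply/seteqP; split => y /=; [case | move=> ->; split].
rewrite sing esum_set1 // in split1; rewrite split1 in split0.
have rest0 : (0 <= \esum_(i in ~` [set x0] `&` ~` [set x]) (f i)%:E)%E.
  by apply: esum_ge0 => y _.
have : ((1 + f x)%:E <= 1%:E)%E by rewrite EFinD {2}split0 leeD2l // leeDl.
by rewrite lee_fin; lra.
Qed.

Section CostAfterHit.
Variables (R : realType) (S A : countType).
Variables (P : S -> A -> S -> R) (d0 : S -> R) (I : S -> A -> Prop) (g : R).
Variables (s_tri s_circ : S).
Hypothesis HP : isKernel P.
Hypothesis Hd : isDist d0.
Hypothesis g_ge0 : 0 <= g.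
Hypothesis g_lt1 : g < 1.
Hypothesis tri_circ : s_tri <> s_circ.
Hypothesis Ptri : forall a, P s_tri a s_circ = 1.
Hypothesis Pcirc : forall a, P s_circ a s_circ = 1.
Hypothesis I_safe : forall s a, I s a -> s <> s_tri /\ s <> s_circ.

Let P_ge0 s a s' : 0 <= P s a s'. Proof. by case: (HP s a) => h _; exact: h. Qed.
Let P_sum1 s a : (\esum_(s' in [set: S]) (P s a s')%:E = 1)%E. Proof. by case: (HP s a). Qed.
Let d0_ge0 s : 0 <= d0 s. Proof. by case: Hd. Qed.
Let d0_sum1 : (\esum_(s in [set: S]) (d0 s)%:E = 1)%E. Proof. by case: Hd. Qed.

Local Notation hit := (hit I).
Local Notation first_hit := (first_hit I).

Definition cost (s : S) (_ : A) : R := if s == s_tri then 1 else 0.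
Definition safe_ind (s : S) (_ : A) : R := ((s != s_tri) && (s != s_circ))%:R.

Lemma costE s a : cost s a = (s == s_tri)%:R.
Proof. by rewrite /cost; case: (s == s_tri). Qed.

Lemma cost_bnd s a : 0 <= cost s a <= 1.
Proof. by rewrite costE; exact: indicator_bnd. Qed.

Lemma safe_ind_bnd s a : 0 <= safe_ind s a <= 1.
Proof. exact: indicator_bnd. Qed.

Lemma P_from_unsafe s a s' : ~~ ((s != s_tri) && (s != s_circ)) -> s' != s_circ ->
  P s a s' = 0.
Proof.
rewrite negb_and !negbK => hs hs'.
apply: (dist_point_mass (x0 := s_circ) _ (P_sum1 s a)) => //; last exact/eqP.
by case/orP: hs => /eqP ->.
Qed.

Lemma intervb_safe (y : S * A) : intervb I y -> ~~ (y.1 == s_tri) && ~~ (y.1 == s_circ).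
Proof. by move=> /asboolP /I_safe [h1 h2]; apply/andP; split; apply/eqP. Qed.

(* The boolean core of one step: with a = "hit before", i = "enters I now",
   t = "now in s_tri", cc = "now in s_circ", zs = "previous state safe". *)
Lemma cost_step_bool (a i t cc zs : bool) : ~~ (t && cc) -> (i -> ~~ t && ~~ cc) ->
  zs || cc ->
  (~~ (a && ~~ i))%:R * (t%:R : R) + (~~ (a && ~~ i))%:R * (~~ t && ~~ cc)%:R <=
  a%:R * i%:R + (~~ a)%:R * zs%:R.
Proof.
by case: a; case: i; case: t; case: cc; case: zs => //= _ _ _;
  rewrite ?mul0r ?mul1r ?addr0 ?add0r ?lexx ?ler01.
Qed.

Section FixedPolicy.
Variable (sg : S -> A -> R).
Hypothesis Hsg : isPolicy sg.
Let sg_ge0 s a : 0 <= sg s a. Proof. by case: (Hsg s) => h _; exact: h. Qed.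
Let sg_sum1 s : (\esum_(a in [set: A]) (sg s a)%:E = 1)%E. Proof. by case: (Hsg s). Qed.

Local Notation m := (mean d0 P sg).
Let m_bnd := mean_bnd d0_ge0 P_ge0 sg_ge0 P_sum1 sg_sum1 d0_sum1.
Let m_le := le_mean_pt d0_ge0 P_ge0 sg_ge0 P_sum1 sg_sum1 d0_sum1.
Let mD := meanD d0_ge0 P_ge0 sg_ge0 P_sum1 sg_sum1 d0_sum1.
Let m_take := mean_take d0_ge0 P_ge0 sg_ge0 P_sum1 sg_sum1.
Let m_dom := disc_mean_dom d0_ge0 P_ge0 sg_ge0 P_sum1 sg_sum1 d0_sum1 g_ge0.

Definition cost_hit (p : seq (S * A)) : R := hit p * lastval cost p.
Definition safe_hit (p : seq (S * A)) : R := hit p * lastval safe_ind p.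

Lemma cost_hit_bnd p : 0 <= cost_hit p <= 1.
Proof. exact: hit_lastval_bnd cost_bnd p. Qed.

Lemma safe_hit_bnd p : 0 <= safe_hit p <= 1.
Proof. exact: hit_lastval_bnd safe_ind_bnd p. Qed.

Lemma cost_safe_hit_bnd p : 0 <= cost_hit p + safe_hit p <= 2.
Proof. by case/andP: (cost_hit_bnd p) => ? ?; case/andP: (safe_hit_bnd p) => ? ?; lra. Qed.

(* A length-one prefix that has hit I hits it for the first time, and in a
   safe state, so not in s_tri. *)
Lemma cost_start : m 0 cost_hit + m 0 safe_hit <= m 0 first_hit.
Proof.
rewrite -(mD _ cost_hit_bnd safe_hit_bnd).
apply: (m_le cost_safe_hit_bnd (first_hit_bnd I)) => -[|y [|]] // _.
rewrite /cost_hit /safe_hit /hit /first_hit /lastval /= costE /avoid /= andbT negbK.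
rewrite /safe_ind mul1r; have := @intervb_safe y; rewrite /intervb.
case: (asboolP (I y.1 y.2)) => hI /=; last by rewrite !mul0r addr0.
by move=> /(_ isT) /andP[/negbTE -> /negbTE ->] /=; rewrite !mul1r add0r.
Qed.

(* After hitting I, being in s_tri at t+1 requires being safe at t, and a
   safe state at t+1 after hitting I was already reached after hitting I. *)
Lemma cost_step N :
  m N.+1 cost_hit + m N.+1 safe_hit <= m N.+1 first_hit + m N safe_hit.
Proof.
rewrite -(m_take N safe_hit_bnd) -(mD _ cost_hit_bnd safe_hit_bnd).
rewrite -(mD _ (K := 1) (K' := 1) (first_hit_bnd I)); last by move=> p; exact: safe_hit_bnd.
apply: (le_mean d0_ge0 P_ge0 sg_ge0 P_sum1 sg_sum1 d0_sum1 (K := 2) (K' := 2)).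
- exact: cost_safe_hit_bnd.
- move=> p; have /andP[? ?] := first_hit_bnd (R:=R) I p.
  by have /andP[? ?] := safe_hit_bnd (take N.+1 p); lra.
case/lastP => [|q y] //; rewrite size_rcons => -[hq].
case: q hq => [|x q] // hq; rewrite take_rcons_size // pathprob_rcons.
set z := last x q.
have pr0 : 0 <= pathprob d0 P sg (x :: q) by apply: pathprob_ge0.
case hz : (((z.1 != s_tri) && (z.1 != s_circ)) || (y.1 == s_circ)); last first.
  move/negbT: hz; rewrite negb_or => /andP[hz1 hz2].
  by rewrite P_from_unsafe // !mul0r mulr0 !mul0r.
apply: ler_wpM2l; first by rewrite mulr_ge0 // mulr_ge0.
rewrite /cost_hit /safe_hit /hit /first_hit init_rcons !lastval_rcons avoid_rcons.
rewrite lastval_cons -/z costE /safe_ind.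
apply: cost_step_bool => //; last exact: intervb_safe.
by apply/negP => /andP[/eqP -> /eqP]; exact: tri_circ.
Qed.

(* Summation by parts of cost_step; the safe_hit term is the slack. *)
Lemma cost_partial N : \sum_(0 <= t < N.+1) g ^+ t * m t cost_hit + g ^+ N * m N safe_hit <=
  \sum_(0 <= t < N.+1) g ^+ t * m t first_hit.
Proof.
elim: N => [|N IH]; first by rewrite !big_nat1 expr0 !mul1r; exact: cost_start.
rewrite big_nat_recr //= [X in _ <= X]big_nat_recr //=.
have := ler_wpM2l (exprn_ge0 N.+1 g_ge0) (cost_step N); rewrite !mulrDr.
have /andP[f0 _] := m_bnd N safe_hit_bnd.
have : g ^+ N.+1 * m N safe_hit <= g ^+ N * m N safe_hit.
  by rewrite exprS ler_wpM2r // -{2}(mul1r (g ^+ N)) ler_wpM2r // ?exprn_ge0 // ltW.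
move: IH; set x := \sum_(0 <= i < N.+1) _; set y := \sum_(0 <= i < N.+1) _; lra.
Qed.

(* The discounted cost collected after hitting I is at most the discounted
   first-hit probability: after leaving the safe states, s_tri is visited at
   most once, one step after the last safe state. *)
Lemma cost_after_hit_le : disc P d0 g sg cost_hit <= disc P d0 g sg first_hit.
Proof.
apply: (dsum_le g_ge0 g_lt1 (m_dom cost_hit_bnd) (lexx 0)) => -[|N].
  by rewrite big_geq // mul0r addr0; exact (disc_ge0 HP Hd g_ge0 g_lt1 Hsg (first_hit_bnd I)).
rewrite mul0r addr0; apply: le_trans (partial_le_dsum g_ge0 g_lt1 N.+1 (m_dom (first_hit_bnd I))).
have /andP[f0 _] := m_bnd N safe_hit_bnd.
have := cost_partial N; have : 0 <= g ^+ N * m N safe_hit by rewrite mulr_ge0 // exprn_ge0.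
set x := \sum_(0 <= i < N.+1) _; set y := \sum_(0 <= i < N.+1) _; lra.
Qed.

End FixedPolicy.
End CostAfterHit.
Arguments cost {R S A} s_tri s _.
Arguments cost_bnd {R S A} s_tri s a.

Section ShieldTheorem.
Variables (R : realType) (S A : countType) (P : S -> A -> S -> R) (r : S -> A -> R).
Variables (g : R) (d0 : S -> R) (s_tri s_circ : S) (I : S -> A -> Prop) (Rt : R).
Hypothesis HP : isKernel P.
Hypothesis r_bnd : forall s a, 0 <= r s a <= 1.
Hypothesis g_ge0 : 0 <= g.
Hypothesis g_lt1 : g < 1.
Hypothesis Hd : isDist d0.
Hypothesis tri_circ : s_tri <> s_circ.
Hypothesis Ptri : forall a, P s_tri a s_circ = 1.
Hypothesis Pcirc : forall a, P s_circ a s_circ = 1.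
Hypothesis I_safe : forall s a, I s a -> s <> s_tri /\ s <> s_circ.
Hypothesis Rt_lt0 : Rt < 0.

Let P_ge0 s a s' : 0 <= P s a s'. Proof. by case: (HP s a) => h _; exact: h. Qed.
Let P_sum1 s a : (\esum_(s' in [set: S]) (P s a s')%:E = 1)%E. Proof. by case: (HP s a). Qed.
Let d0_ge0 s : 0 <= d0 s. Proof. by case: Hd. Qed.
Let d0_sum1 : (\esum_(s in [set: S]) (d0 s)%:E = 1)%E. Proof. by case: Hd. Qed.

Definition clean_reward (sg : S -> A -> R) := disc P d0 g sg (fun p => clean I p * lastval r p).
Definition first_hit_mass (sg : S -> A -> R) := disc P d0 g sg (first_hit I).
Definition hit_mass (sg : S -> A -> R) := disc P d0 g sg (hit I).

Local Notation tV rho := (value (abs_d0 d0) (abs_P P I) rho g (abs_r r I Rt)).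

Lemma restrictS_policy (rho : option S -> A -> R) : isPolicy rho -> isPolicy (restrictS rho).
Proof. by move=> H s; exact: H (Some s). Qed.

Section AbsorbingValue.
Variable (rho : option S -> A -> R).
Hypothesis Hrho : isPolicy rho.
Let rho_ge0 o a : 0 <= rho o a. Proof. by case: (Hrho o) => h _; exact: h. Qed.
Let rhoS := restrictS rho.
Let rhoS_ge0 s a : 0 <= rhoS s a. Proof. exact: rho_ge0. Qed.
Let rhoS_sum1 s : (\esum_(a in [set: A]) (rhoS s a)%:E = 1)%E. Proof. by case: (Hrho (Some s)). Qed.
Local Notation pos_part f := (fun o a => Num.max 0 (f o a)).
Local Notation neg_part f := (fun o a => Num.max 0 (- f o a)).

Lemma Eprefix_abs_reward t :
  Eprefix (abs_d0 d0) (abs_P P I) rho t (lastval (pos_part (abs_r r I Rt))) =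
  Eprefix d0 P rhoS t (fun p => clean I p * lastval r p).
Proof.
rewrite (Eprefix_absorbing I d0_ge0 P_ge0 rho_ge0); first last.
- by move=> o a; rewrite le_max lexx.
- by move=> a; rewrite /= maxxx.
congr Eprefix; apply/funext; case/lastP => [|q y]; first by rewrite /lastval /= !mulr0.
rewrite init_rcons !lastval_rcons /clean avoid_rcons /= /intervb.
case: (asboolP (I y.1 y.2)) => hy /=; first by rewrite max_l ?(ltW Rt_lt0) // andbF mulr0 mul0r.
by have /andP[h1 h2] := r_bnd y.1 y.2; rewrite max_r // andbT.
Qed.

Lemma Eprefix_abs_penalty t :
  Eprefix (abs_d0 d0) (abs_P P I) rho t (lastval (neg_part (abs_r r I Rt))) =
  Eprefix d0 P rhoS t (fun p => `|Rt| * first_hit I p).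
Proof.
rewrite (Eprefix_absorbing I d0_ge0 P_ge0 rho_ge0); first last.
- by move=> o a; rewrite le_max lexx.
- by move=> a; rewrite /= oppr0 maxxx.
congr Eprefix; apply/funext; case/lastP => [|q y]; first by rewrite /lastval /first_hit /= !mulr0.
rewrite /first_hit init_rcons !lastval_rcons /= /intervb.
case: (asboolP (I y.1 y.2)) => hy /=.
  by rewrite max_r ?oppr_ge0 ?ltW // ltr0_norm // !mulr1 mulrC.
by have /andP[h1 h2] := r_bnd y.1 y.2; rewrite max_l ?oppr_le0 // !mulr0.
Qed.

Lemma absorbing_valueE : tV rho = clean_reward rhoS - `|Rt| * first_hit_mass rhoS.
Proof.
have b1 := clean_lastval_bnd I r_bnd.
have b2 p : 0 <= `|Rt| * first_hit I p <= `|Rt|.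
  by have /andP[h1 h2] := first_hit_bnd (R:=R) I p; rewrite mulr_ge0 //= ler_piMr.
have seriesE := disc_seriesE d0_ge0 P_ge0 rhoS_ge0 P_sum1 rhoS_sum1 d0_sum1 g_ge0 g_lt1.
rewrite /value /nnvalue /stepexp.
under eq_eseriesr do rewrite -/(Eprefix _ _ rho _ _) Eprefix_abs_reward.
under [X in _ - fine X]eq_eseriesr do rewrite -/(Eprefix _ _ rho _ _) Eprefix_abs_penalty.
rewrite (seriesE _ _ b1) (seriesE _ _ b2) /=; congr (_ - _).
rewrite /first_hit_mass /disc -(dsumZ g_ge0 g_lt1 (normr_ge0 Rt)
  (disc_mean_dom d0_ge0 P_ge0 rhoS_ge0 P_sum1 rhoS_sum1 d0_sum1 g_ge0 (first_hit_bnd I))).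
congr dsum; apply/funext => t.
rewrite (meanZ d0_ge0 P_ge0 rhoS_ge0 P_sum1 rhoS_sum1 d0_sum1 t (normr_ge0 Rt)
  (first_hit_bnd I)).
by rewrite mulrCA.
Qed.

End AbsorbingValue.

Section PolicyBounds.
Variable (sg : S -> A -> R).
Hypothesis Hsg : isPolicy sg.

Lemma first_hit_mass_ge0 : 0 <= first_hit_mass sg.
Proof. exact (disc_ge0 HP Hd g_ge0 g_lt1 Hsg (first_hit_bnd I)). Qed.

Lemma clean_reward_le : clean_reward sg <= (1 - g)^-1.
Proof. exact (disc_le_geo HP Hd g_ge0 g_lt1 Hsg (clean_lastval_bnd I r_bnd)). Qed.

(* Rewards lie in [0, 1], so the reward collected after hitting I is at most
   the probability of having hit I. *)
Lemma value_reward_bounds :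
  clean_reward sg <= value d0 P sg g r <= clean_reward sg + hit_mass sg.
Proof.
rewrite (value_split I HP Hd g_ge0 g_lt1 Hsg r_bnd) lerDl lerD2l -/(clean_reward sg).
have b := hit_lastval_bnd I r_bnd.
rewrite (disc_ge0 HP Hd g_ge0 g_lt1 Hsg b) /=.
apply: (le_disc HP Hd g_ge0 g_lt1 Hsg b (hit_bnd I)) => p.
have /andP[h1 h2] := hit_bnd (R:=R) I p; have /andP[h3 h4] := lastval_bnd1 p r_bnd.
by rewrite -{2}(mulr1 (hit I p)) ler_wpM2l.
Qed.

End PolicyBounds.

(* Absorbing values are bounded above, so every one is below their supremum. *)
Lemma absorbing_value_le_sup (rho : option S -> A -> R) : isPolicy rho ->
  tV rho <= sup [set v | exists p, isPolicy p /\ v = tV p].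
Proof.
move=> Hrho; apply: ub_le_sup; last by exists rho.
exists (1 - g)^-1 => v [p [Hp ->]]; rewrite absorbing_valueE //.
have HpS := restrictS_policy Hp.
have := clean_reward_le HpS; have := first_hit_mass_ge0 HpS.
by have := normr_ge0 Rt; nra.
Qed.

Section NearOptimal.
Variables (pi : option S -> A -> R) (eps : R).
Hypothesis Hpi : isPolicy pi.
Hypothesis pi_opt : forall rho, isPolicy rho -> tV rho <= tV pi + eps.

Let piS := restrictS pi.
Let HpiS : isPolicy piS := restrictS_policy Hpi.

(* Performance: compare pi with pistar run in the absorbing MDP. *)
Lemma regret_bound (pistar : S -> A -> R) : isPolicy pistar ->
  value d0 P pistar g r - value d0 P piS g r
    <= (`|Rt| + 1 / (1 - g)) * PG d0 P g I pistar + eps.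
Proof.
move=> Hps.
pose rho o a := if o is Some s then pistar s a else pi None a.
have Hrho : isPolicy rho by case=> [s|]; [exact: Hps | exact: Hpi].
have opt : clean_reward pistar - `|Rt| * first_hit_mass pistar <=
    clean_reward piS - `|Rt| * first_hit_mass piS + eps.
  by have := pi_opt Hrho; rewrite !absorbing_valueE.
have first_hit_le : first_hit_mass pistar <= (1 - g) * hit_mass pistar.
  exact (first_hit_le_hit I HP Hd g_ge0 g_lt1 Hps).
have /andP[_ Vstar] := value_reward_bounds Hps.
have /andP[Vpi _] := value_reward_bounds HpiS.
have Hpi0 := first_hit_mass_ge0 HpiS.
have Rt0 : 0 <= `|Rt| := normr_ge0 Rt.
rewrite (PG_hit I HP Hd g_ge0 g_lt1 Hps) -/(hit_mass pistar).
have -> : (`|Rt| + 1 / (1 - g)) * ((1 - g) * hit_mass pistar) =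
    `|Rt| * ((1 - g) * hit_mass pistar) + hit_mass pistar.
  by field; rewrite subr_eq0 eq_sym lt_eqF.
have := ler_wpM2l Rt0 first_hit_le; have := mulr_ge0 Rt0 Hpi0; lra.
Qed.

Hypothesis I_partial : forall s a, I s a -> exists a', ~ I s a'.

(* The never-intervening policy shows that pi rarely reaches I. *)
Lemma first_hit_mass_le : `|Rt| * first_hit_mass piS <= eps.
Proof.
pose av := avoider I pi.
have Hav : isPolicy av := avoider_policy I Hpi.
have HavS := restrictS_policy Hav.
have av_null : first_hit_mass (restrictS av) = 0.
  apply: (dsum0 g_ge0 g_lt1) => t; rewrite (first_hit_null HP Hd HavS) ?mulr0 //.
  exact: avoider_null.
have opt : clean_reward (restrictS av) <= clean_reward piS - `|Rt| * first_hit_mass piS + eps.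
  by have := pi_opt Hav; rewrite !absorbing_valueE // av_null mulr0 subr0.
have : clean_reward piS <= clean_reward (restrictS av).
  by apply: (disc_clean_mono HP Hd g_ge0 g_lt1 HpiS HavS r_bnd); exact: avoider_ge.
lra.
Qed.

Lemma cost_bound (mu : S -> A -> R) : isPolicy mu ->
  value d0 P piS g (cost s_tri) <= value d0 P (shield I mu piS) g (cost s_tri) + eps / `|Rt|.
Proof.
move=> Hmu; have Hsh := shield_policy I HpiS Hmu.
have Rt0 : 0 < `|Rt| by rewrite normr_gt0 lt_eqF.
have cb := @cost_bnd R S A s_tri.
rewrite !(value_split I HP Hd g_ge0 g_lt1 _ cb) //.
have clean_le : disc P d0 g piS (fun p => clean I p * lastval (cost s_tri) p) <=
    disc P d0 g (shield I mu piS) (fun p => clean I p * lastval (cost s_tri) p).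
  by apply: disc_clean_mono HpiS Hsh cb _ => //; exact: shield_ge.
have after_hit := cost_after_hit_le HP Hd g_ge0 g_lt1 tri_circ Ptri Pcirc I_safe HpiS.
have after_hit0 : 0 <= disc P d0 g (shield I mu piS) (fun p => hit I p * lastval (cost s_tri) p).
  exact (disc_ge0 HP Hd g_ge0 g_lt1 Hsh (hit_lastval_bnd I cb)).
have : first_hit_mass piS <= eps / `|Rt| by rewrite ler_pdivlMr // mulrC first_hit_mass_le.
move: clean_le after_hit after_hit0; rewrite /cost_hit /first_hit_mass; lra.
Qed.

End NearOptimal.
End ShieldTheorem.

Theorem mainTheorem10 (R : realType) (S A : countType)
  (P : S -> A -> S -> R) (r : S -> A -> R) (gamma : R) (d0 : S -> R)
  (s_tri s_circ : S)
  (Qbar : S -> A -> R) (mu : S -> A -> R) (eta : R)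
  (Rt : R) (pi : option S -> A -> R) (eps : R) (pistar : S -> A -> R) :
  isKernel P ->
  (forall s a, 0 <= r s a <= 1) ->
  0 <= gamma < 1 ->
  isDist d0 ->
  s_tri <> s_circ ->
  (forall a, P s_tri a s_circ = 1) ->
  (forall a, P s_circ a s_circ = 1) ->
  (forall a, r s_tri a = 0) ->
  (forall a, r s_circ a = 0) ->
  d0 s_circ = 0 ->
  let safe := fun s => s <> s_tri /\ s <> s_circ in
  let c := fun (s : S) (_ : A) => if s == s_tri then (1 : R) else 0 in
  isPolicy mu ->
  (forall s a, safe s -> 0 <= Qbar s a <= 1) ->
  0 <= eta <= 1 ->
  let I := intervene safe Qbar mu eta in
  partialset safe I ->
  Rt < 0 ->
  isPolicy pi ->
  isPolicy pistar ->
  let tV := fun p => value (abs_d0 d0) (abs_P P I) p gamma (abs_r r I Rt) in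
  let tVstar := sup [set v | exists p, isPolicy p /\ v = tV p] in
  tVstar - tV pi <= eps ->
  let piS := restrictS pi in
  let pi' := shield I mu piS in
  value d0 P pistar gamma r - value d0 P piS gamma r
    <= (`|Rt| + 1 / (1 - gamma)) * PG d0 P gamma I pistar + eps
  /\ value d0 P piS gamma c <= value d0 P pi' gamma c + eps / `|Rt|.
Proof.
move=> HP Hr /andP[g_ge0 g_lt1] Hd tri_circ Ptri Pcirc _ _ _ safe c Hmu _ _ I Hpart Rt_lt0
  Hpi Hps tV tVstar Heps piS pi'.
have I_safe s a : I s a -> s <> s_tri /\ s <> s_circ by case.
have I_partial s a : I s a -> exists a', ~ I s a' by move=> hI; apply: (Hpart s a) => //; case: hI.
have pi_opt rho : isPolicy rho -> tV rho <= tV pi + eps.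
  move=> Hrho.
  have le_sup : tV rho <= tVstar := absorbing_value_le_sup I HP Hr g_ge0 g_lt1 Hd Rt_lt0 Hrho.
  by move: le_sup Heps; clearbody tV tVstar; lra.
split.
- exact (regret_bound HP Hr g_ge0 g_lt1 Hd Rt_lt0 Hpi pi_opt Hps).
- exact (cost_bound HP Hr g_ge0 g_lt1 Hd tri_circ Ptri Pcirc I_safe Rt_lt0 Hpi pi_opt
    I_partial Hmu).
Qed.
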